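(* Let $\alpha\in(0,1)\cup(1,\infty)$, let $\omega_{ABE}$ be a state on a finite-dimensional $\mathcal{H}_A\otimes\mathcal{H}_B\otimes\mathcal{H}_E$, and let $\sigma_{A_1}$, $\tau_{B_1}$, $\gamma_{E_1}$ be states on finite-dimensional Hilbert spaces. Let $\rho_{AA_1BB_1EE_1}=\omega_{ABE}\otimes\sigma_{A_1}\otimes\tau_{B_1}\otimes\gamma_{E_1}$. Then $$I_\alpha(AA_1;BB_1|EE_1)_\rho=I_\alpha(A;B|E)_\omega.$$
   Context: $\log$ is natural. For a positive semi-definite $M$ and function $f$, $f(M)$ applies $f$ only to nonzero eigenvalues (negative powers are generalized inverses on the support). For a state $\rho_{ABE}$ and $\alpha\in(0,1)\cup(1,\infty)$, the Rényi conditional mutual information is $$I_\alpha(A;B|E)_\rho=\frac{\alpha}{\alpha-1}\log\mathrm{Tr}\Big\{\Big(\rho_E^{(\alpha-1)/2}\,\mathrm{Tr}_A\big\{\rho_{AE}^{(1-\alpha)/2}\rho_{ABE}^{\alpha}\rho_{AE}^{(1-\alpha)/2}\big\}\,\rho_E^{(\alpha-1)/2}\Big)^{1/\alpha}\Big\},$$ with $\rho_{AE},\rho_E$ marginals; for composite systems (e.g. $AA_1$) the same formula applies with the composite system in place of the single one. *)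

From HB Require Import structures.
From Stdlib Require Import ClassicalEpsilon.
From mathcomp Require Import all_boot all_order all_algebra.
From mathcomp Require Import complex mxtens.
From mathcomp Require Import reals exp.

Set Implicit Arguments.
Unset Strict Implicit.
Unset Printing Implicit Defensive.

Import Order.TTheory GRing.Theory Num.Theory.
Local Open Scope ring_scope.

Section QInfo.
Variable R : realType.
Local Notation C := R[i].

Definition adj {m n} (M : 'M[C]_(m, n)) : 'M[C]_(n, m) := map_mx (@conjc R) M^T.

Definition unitary {n} (U : 'M[C]_n) : bool := U *m adj U == 1%:M.

Definition psd {n} (M : 'M[C]_n) : Prop :=
  adj M = M /\ forall v : 'cV[C]_n, 0 <= (adj v *m M *m v) 0 0.

Definition is_state {n} (M : 'M[C]_n) : Prop := psd M /\ \tr M = 1.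

Definition spectral_dec {n} (M : 'M[C]_n) (p : 'M[C]_n * 'rV[R]_n) : Prop :=
  unitary p.1 /\ M = p.1 *m diag_mx (map_mx (fun x : R => x%:C%C) p.2) *m adj p.1.

(* functional calculus for (Hermitian) M: f applied to the eigenvalues,
   through a (chosen) spectral decomposition; independent of the choice. *)
Definition mfun {n} (f : R -> R) (M : 'M[C]_n) : 'M[C]_n :=
  let p := epsilon (inhabits (1%:M, 0)) (spectral_dec M) in
  p.1 *m diag_mx (map_mx (fun x : R => (f x)%:C%C) p.2) *m adj p.1.

(* M^p applied only on nonzero eigenvalues (generalized inverse for p < 0) *)
Definition mpow {n} (M : 'M[C]_n) (p : R) : 'M[C]_n :=
  mfun (fun x => if x == 0 then 0 else powR x p) M.

Definition idx2 {m n} (i : 'I_m) (j : 'I_n) : 'I_(m * n) := mxtens_index (i, j).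
Definition idx3 {dA dB dE} (a : 'I_dA) (b : 'I_dB) (e : 'I_dE) : 'I_(dA * dB * dE) :=
  idx2 (idx2 a b) e.
Definition fst2 {m n} (k : 'I_(m * n)) : 'I_m := (mxtens_unindex k).1.
Definition snd2 {m n} (k : 'I_(m * n)) : 'I_n := (mxtens_unindex k).2.

Section Tri.
Variables dA dB dE : nat.

Definition ptrB (M : 'M[C]_(dA * dB * dE)) : 'M[C]_(dA * dE) :=
  \matrix_(i, j) \sum_(b < dB) M (idx3 (fst2 i) b (snd2 i)) (idx3 (fst2 j) b (snd2 j)).

Definition ptrA_AE (M : 'M[C]_(dA * dE)) : 'M[C]_dE :=
  \matrix_(i, j) \sum_(a < dA) M (idx2 a i) (idx2 a j).

Definition ptrA (M : 'M[C]_(dA * dB * dE)) : 'M[C]_(dB * dE) :=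
  \matrix_(i, j) \sum_(a < dA) M (idx3 a (fst2 i) (snd2 i)) (idx3 a (fst2 j) (snd2 j)).

(* X_AE (x) 1_B on ABE *)
Definition liftAE (X : 'M[C]_(dA * dE)) : 'M[C]_(dA * dB * dE) :=
  \matrix_(i, j) ((snd2 (fst2 i) == snd2 (fst2 j))%:R *
                  X (idx2 (fst2 (fst2 i)) (snd2 i)) (idx2 (fst2 (fst2 j)) (snd2 j))).

Definition liftE (Z : 'M[C]_dE) : 'M[C]_(dB * dE) :=
  \matrix_(i, j) ((fst2 i == fst2 j)%:R * Z (snd2 i) (snd2 j)).

Definition renyi_cmi (alpha : R) (rho : 'M[C]_(dA * dB * dE)) : R :=
  let rhoAE := ptrB rho in
  let rhoE := ptrA_AE rhoAE in
  let X := liftAE (mpow rhoAE ((1 - alpha) / 2)) in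
  let inner := ptrA (X *m mpow rho alpha *m X) in
  let Y := liftE (mpow rhoE ((alpha - 1) / 2)) in
  alpha / (alpha - 1) * ln (complex.Re (\tr (mpow (Y *m inner *m Y) (alpha^-1)))).
End Tri.

(* rho_{A A1 B B1 E E1} = omega_ABE (x) sigma_A1 (x) tau_B1 (x) gamma_E1,
   with subsystems regrouped as (A A1), (B B1), (E E1). *)
Definition prod_state {dA dB dE dA1 dB1 dE1 : nat}
  (omega : 'M[C]_(dA * dB * dE)) (sigma : 'M[C]_dA1) (tau : 'M[C]_dB1)
  (gamma : 'M[C]_dE1) : 'M[C]_((dA * dA1) * (dB * dB1) * (dE * dE1)) :=
  \matrix_(i, j)
    (let aa1 := fst2 (fst2 i) in let bb1 := snd2 (fst2 i) in let ee1 := snd2 i in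
     let aa1' := fst2 (fst2 j) in let bb1' := snd2 (fst2 j) in let ee1' := snd2 j in
     omega (idx3 (fst2 aa1) (fst2 bb1) (fst2 ee1)) (idx3 (fst2 aa1') (fst2 bb1') (fst2 ee1'))
     * sigma (snd2 aa1) (snd2 aa1') * tau (snd2 bb1) (snd2 bb1')
     * gamma (snd2 ee1) (snd2 ee1')).
End QInfo.

(* The operator [Z] whose [1/alpha]-th power is traced in [I_alpha] is built
   from partial traces, lifts [X |-> X (x) 1], matrix products and spectral
   powers [x |-> x^p] (with [0^p = 0]).  Each of these commutes with Kronecker
   products; for the powers this is because a Kronecker product of spectral
   decompositions is again one and [x |-> x^p] is multiplicative on
   [[0, +oo)].  Hence [Z] of [omega (x) (sigma (x) tau (x) gamma)] is
   [Z_omega (x) Z_(sigma (x) tau (x) gamma)] and the trace factorizes.  For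
   the product state all powers cancel, [Z = tau^alpha (x) gamma^alpha], so the
   second factor is [Tr (tau (x) gamma) = 1]. *)

From Pilot Require Import Defs.
From Stdlib Require Import ClassicalEpsilon.
From mathcomp Require Import all_boot all_order all_algebra.
From mathcomp Require Import complex mxtens.
From mathcomp Require Import reals exp.
From mathcomp Require Import spectral.
From mathcomp Require Import ring.

Set Implicit Arguments.
Unset Strict Implicit.
Unset Printing Implicit Defensive.

Import Order.TTheory GRing.Theory Num.Theory.
Local Open Scope ring_scope.

Section QuantumRenyi.
Variable R : realType.
Local Notation C := R[i].
Local Notation adj := (@adj R _ _).

(** * Functional calculus *)

Lemma adj_mul m n p (A : 'M[C]_(m, n)) (B : 'M[C]_(n, p)) :
  adj (A *m B) = adj B *m adj A.
Proof. by rewrite /Defs.adj trmx_mul map_mxM. Qed.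

Lemma adjK m n (A : 'M[C]_(m, n)) : adj (adj A) = A.
Proof. by apply/matrixP=> i j; rewrite !mxE conjcK. Qed.

Lemma unitary_mulmxV n (U : 'M[C]_n) : unitary U -> U *m adj U = 1%:M.
Proof. by move/eqP. Qed.

Lemma unitary_mulVmx n (U : 'M[C]_n) : unitary U -> adj U *m U = 1%:M.
Proof. by move/eqP/mulmx1C. Qed.

Definition diagf n (f : R -> R) (d : 'rV[R]_n) : 'M[C]_n :=
  diag_mx (map_mx (fun x => (f x)%:C%C) d).

Lemma diagfE n f (d : 'rV[R]_n) i j : diagf f d i j = (f (d 0 i))%:C%C *+ (i == j).
Proof. by rewrite !mxE. Qed.

Lemma adj_diagf n f (d : 'rV[R]_n) : adj (diagf f d) = diagf f d.
Proof.
apply/matrixP=> i j; rewrite !mxE eq_sym; case: eqP => [->|_].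
  by rewrite !mulr1n conjc_real.
by rewrite !mulr0n conjc0.
Qed.

Lemma mul_diagf n f g (d : 'rV[R]_n) :
  diagf f d *m diagf g d = diagf (fun x => f x * g x) d.
Proof. by rewrite mulmx_diag; congr diag_mx; apply/rowP=> j; rewrite !mxE rmorphM. Qed.

Lemma diagf_map n f g (d : 'rV[R]_n) : diagf g (map_mx f d) = diagf (g \o f) d.
Proof. by apply/matrixP=> i j; rewrite !diagfE mxE. Qed.

Lemma eq_diagf n f g (d : 'rV[R]_n) :
  (forall i, f (d 0 i) = g (d 0 i)) -> diagf f d = diagf g d.
Proof. by move=> fg; apply/matrixP=> i j; rewrite !diagfE fg. Qed.

(* [W i j * (d j - e i) = 0]: an intertwiner only connects equal eigenvalues. *)
Lemma intertwine_diagf n (W : 'M[C]_n) d e f :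
  W *m diagf id d = diagf id e *m W -> W *m diagf f d = diagf f e *m W.
Proof.
move=> WE; apply/matrixP=> i j; move/matrixP/(_ i j): WE.
rewrite !mul_mx_diag !mul_diag_mx !mxE.
have [->|Wij] := eqVneq (W i j) 0; first by rewrite !mulr0 !mul0r.
by rewrite [X in X = _]mulrC => /(mulIf Wij) [->]; rewrite mulrC.
Qed.

Lemma conj_diagf_congr n (U V : 'M[C]_n) d e f :
  unitary U -> unitary V ->
  U *m diagf id d *m adj U = V *m diagf id e *m adj V ->
  U *m diagf f d *m adj U = V *m diagf f e *m adj V.
Proof.
move=> uU uV eqUV; set W := adj V *m U.
have /intertwine_diagf WfE : W *m diagf id d = diagf id e *m W.
  have := congr1 (fun X => adj V *m X *m U) eqUV.
  rewrite /W !mulmxA -!(mulmxA _ _ U) unitary_mulVmx // mulmx1.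
  by rewrite unitary_mulVmx // mul1mx.
have UE : U = V *m W by rewrite /W mulmxA unitary_mulmxV // mul1mx.
have uW : W *m adj W = 1%:M.
  by rewrite /W adj_mul adjK mulmxA -(mulmxA _ U) unitary_mulmxV // mulmx1 unitary_mulVmx.
clearbody W; rewrite UE adj_mul -!mulmxA; congr (_ *m _).
by rewrite !mulmxA WfE -(mulmxA _ W) uW mulmx1.
Qed.

Lemma spectral_decE n (M : 'M[C]_n) U d :
  spectral_dec M (U, d) -> M = U *m diagf id d *m adj U.
Proof. by case. Qed.

Lemma mfunE n f (M : 'M[C]_n) U d :
  spectral_dec M (U, d) -> mfun f M = U *m diagf f d *m adj U.
Proof.
move=> Md; have : spectral_dec M (epsilon (inhabits (1%:M, 0)) (spectral_dec M)).
  by apply: epsilon_spec; exists (U, d).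
rewrite /mfun; case: (epsilon _ _) => V e [uV MVe] /=.
by apply: conj_diagf_congr => //; [case: Md | rewrite -MVe -(spectral_decE Md)].
Qed.

Lemma mulmx_mfun n f g (M : 'M[C]_n) U d : spectral_dec M (U, d) ->
  mfun f M *m mfun g M = mfun (fun x => f x * g x) M.
Proof.
move=> Md; rewrite !(mfunE _ Md); have [uU _] := Md.
rewrite -!mulmxA (mulmxA (adj U)) unitary_mulVmx // mul1mx.
by rewrite (mulmxA (diagf f d)) mul_diagf !mulmxA.
Qed.

Lemma eq_mfun n f g (M : 'M[C]_n) U d : spectral_dec M (U, d) ->
  (forall i, f (d 0 i) = g (d 0 i)) -> mfun f M = mfun g M.
Proof. by move=> Md fg; rewrite !(mfunE _ Md) (eq_diagf fg). Qed.

Lemma mfun_id n (M : 'M[C]_n) U d : spectral_dec M (U, d) -> mfun id M = M.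
Proof. by move=> Md; rewrite (mfunE _ Md) -(spectral_decE Md). Qed.

Lemma spectral_dec_mfun n f (M : 'M[C]_n) U d : spectral_dec M (U, d) ->
  spectral_dec (mfun f M) (U, map_mx f d).
Proof.
move=> Md; split; first by case: Md.
by rewrite /= (mfunE _ Md) -[diag_mx _]/(diagf id (map_mx f d)) diagf_map.
Qed.

Lemma mfun_comp n f g (M : 'M[C]_n) U d : spectral_dec M (U, d) ->
  mfun g (mfun f M) = mfun (g \o f) M.
Proof.
by move=> Md; rewrite (mfunE _ (spectral_dec_mfun f Md)) (mfunE _ Md) diagf_map.
Qed.

Lemma adj_mfun n f (M : 'M[C]_n) : adj (mfun f M) = mfun f M.
Proof. by rewrite /mfun !adj_mul adjK adj_diagf mulmxA. Qed.

Definition nneg_spectral n (M : 'M[C]_n) :=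
  exists U d, spectral_dec M (U, d) /\ forall i, 0 <= d 0 i.

Lemma nneg_spectral_mfun n f (M : 'M[C]_n) :
  (forall x, 0 <= f x) -> nneg_spectral M -> nneg_spectral (mfun f M).
Proof.
move=> f_ge0 [U [d [Md _]]]; exists U, (map_mx f d).
by split=> [|i]; [exact: spectral_dec_mfun | rewrite mxE].
Qed.

Lemma mulmx_mfun3 n f g h k (M : 'M[C]_n) : nneg_spectral M ->
  (forall x, 0 <= x -> f x * g x * h x = k x) ->
  mfun f M *m mfun g M *m mfun h M = mfun k M.
Proof.
move=> [U [d [Md d_ge0]]] fghk.
by rewrite !(mulmx_mfun _ _ Md) (eq_mfun (g := k) Md) // => i; rewrite fghk.
Qed.

Lemma mfun_invK n f g (M : 'M[C]_n) : nneg_spectral M ->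
  (forall x, 0 <= x -> g (f x) = x) -> mfun g (mfun f M) = M.
Proof.
move=> [U [d [Md d_ge0]]] gfK; rewrite (mfun_comp _ _ Md) -[RHS](mfun_id Md).
by apply: (eq_mfun Md) => i; rewrite /= gfK.
Qed.

(** * Positive semidefinite matrices *)

Lemma psd_adj_conj n m (M : 'M[C]_n) (S : 'M[C]_(n, m)) :
  psd M -> psd (adj S *m M *m S).
Proof.
move=> [hM pM]; split; first by rewrite !adj_mul adjK hM mulmxA.
by move=> v; have := pM (S *m v); rewrite adj_mul !mulmxA.
Qed.

Lemma psd0 n : psd (0 : 'M[C]_n).
Proof.
split; first by apply/matrixP=> i j; rewrite !mxE conjc0.
by move=> v; rewrite mulmx0 mul0mx mxE.
Qed.

Lemma psdD n (M N : 'M[C]_n) : psd M -> psd N -> psd (M + N).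
Proof.
move=> [hM pM] [hN pN]; split.
  by apply/matrixP=> i j; rewrite -[in RHS]hM -[in RHS]hN !mxE rmorphD.
by move=> v; rewrite mulmxDr mulmxDl mxE addr_ge0.
Qed.

Lemma psd_sum n I (r : seq I) (P : pred I) (F : I -> 'M[C]_n) :
  (forall i, P i -> psd (F i)) -> psd (\sum_(i <- r | P i) F i).
Proof.
by move=> psdF; elim/big_rec: _ => [|i M Pi]; [exact: psd0 | apply: psdD; exact: psdF].
Qed.

Lemma psd_diagf n f (d : 'rV[R]_n) : (forall i, 0 <= f (d 0 i)) -> psd (diagf f d).
Proof.
move=> f_ge0; split=> [|v]; first exact: adj_diagf.
rewrite mul_mx_diag mxE; apply: sumr_ge0 => i _.
rewrite !mxE mulrAC [_^*%C * _]mulrC; apply: mulr_ge0; last by rewrite lecR f_ge0.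
exact: mulcJ_ge0.
Qed.

Lemma psd_mfun n f (M : 'M[C]_n) : (forall x, 0 <= f x) -> psd (mfun f M).
Proof.
move=> f_ge0; rewrite /mfun -[X in psd (X *m _ *m _)]adjK.
by apply: psd_adj_conj; apply: psd_diagf.
Qed.

Lemma nneg_spectral_psd n (M : 'M[C]_n) : nneg_spectral M -> psd M.
Proof.
move=> [U [d [Md d_ge0]]]; rewrite (spectral_decE Md) -[X in psd (X *m _ *m _)]adjK.
by apply: psd_adj_conj; apply: psd_diagf.
Qed.

(* The spectral theorem of [spectral.v], with eigenvalues made real by hermiticity
   and nonnegative by evaluating the quadratic form on the eigenvectors. *)
Lemma psd_nneg_spectral n (M : 'M[C]_n) : psd M -> nneg_spectral M.
Proof.
move=> [hM pM].
have herm : M \is hermsymmx by apply/is_hermitianmxP; rewrite expr0 scale1r -[LHS]hM.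
have /orthomx_spectralP ME := hermitian_normalmx herm.
have real := hermitian_spectral_diag_real herm.
set P := spectralmx M in ME; set sp := spectral_diag M in ME real.
have uP : P *m adj P = 1%:M by apply/eqP; exact: spectral_unitarymx.
rewrite invmx_unitary ?spectral_unitarymx // in ME.
pose d : 'rV[R]_n := map_mx (@complex.Re R) sp.
have spE : map_mx (fun x => x%:C%C) d = sp.
  by apply/rowP=> j; rewrite !mxE RRe_real //; exact: (mxOverP real).
have Md : spectral_dec M (adj P, d).
  split; last by rewrite /= adjK spE.
  by apply/eqP; rewrite adjK; exact: mulmx1C.
exists (adj P), d; split=> // i.
have := pM (adj P *m delta_mx i 0).
rewrite adj_mul adjK ME !mulmxA -!(mulmxA _ P (adj P)) uP !mulmx1.
rewrite -mulmxA mul_diag_mx !mxE (bigD1 i) //= big1 => [|j ji]; last first.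
  by rewrite !mxE (negbTE ji) /= !mulr0.
rewrite !mxE !eqxx conjc_nat mul1r addr0 mulr1.
by rewrite -{1}(RRe_real (mxOverP real 0 i)) lecR.
Qed.

(* [ptrB], [ptrA] and [ptrA_AE] are all of this shape. *)
Definition ptr_by N n K (g : 'I_K -> 'I_n -> 'I_N) (M : 'M[C]_N) : 'M[C]_n :=
  \matrix_(i, j) \sum_k M (g k i) (g k j).

Lemma psd_ptr_by N n K (g : 'I_K -> 'I_n -> 'I_N) M : psd M -> psd (ptr_by g M).
Proof.
move=> pM; pose S k : 'M[C]_(N, n) := \matrix_(l, i) (l == g k i)%:R.
suff -> : ptr_by g M = \sum_k adj (S k) *m M *m S k.
  by apply: psd_sum => k _; apply: psd_adj_conj.
apply/matrixP=> i j; rewrite !mxE summxE; apply: eq_bigr => k _.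
rewrite -mulmxA mxE (bigD1 (g k i)) //= big1 => [|l /negbTE lNi]; last first.
  by rewrite !mxE lNi conjc0 mul0r.
rewrite !mxE eqxx conjc1 mul1r addr0 (bigD1 (g k j)) //= big1 => [|l /negbTE lNj].
  by rewrite !mxE eqxx mulr1 addr0.
by rewrite !mxE lNj mulr0.
Qed.

Lemma psd_ptrB dA dB dE (M : 'M[C]_(dA * dB * dE)) : psd M -> psd (ptrB M).
Proof. exact: (@psd_ptr_by _ _ _ (fun b i => idx3 (fst2 i) b (snd2 i))). Qed.

Lemma psd_ptrA_AE dA dE (M : 'M[C]_(dA * dE)) : psd M -> psd (ptrA_AE M).
Proof. exact: (@psd_ptr_by _ _ _ (fun a i => idx2 a i)). Qed.

Lemma psd_ptrA dA dB dE (M : 'M[C]_(dA * dB * dE)) : psd M -> psd (ptrA M).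
Proof. exact: (@psd_ptr_by _ _ _ (fun a i => idx3 a (fst2 i) (snd2 i))). Qed.

(** * Kronecker products and regrouping of tensor factors *)

(* Kronecker product read through a bijection [h] from the index set onto a
   pair of index sets; [h] absorbs the regrouping of tensor factors. *)
Definition kron_by N n1 n2 (h : 'I_N -> 'I_n1 * 'I_n2) (A : 'M[C]_n1) (B : 'M[C]_n2) :
    'M[C]_N :=
  \matrix_(i, j) (A (h i).1 (h j).1 * B (h i).2 (h j).2).

Section KronBy.
Variables (N n1 n2 : nat) (h : 'I_N -> 'I_n1 * 'I_n2).
Hypothesis h_bij : bijective h.

Let h_inj : injective h. Proof. exact: bij_inj. Qed.

Lemma sum_kron_index (F : 'I_n1 -> 'I_n2 -> C) :
  \sum_k F (h k).1 (h k).2 = \sum_i \sum_j F i j.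
Proof. by rewrite pair_big /= (reindex h) //; exact: onW_bij. Qed.

Lemma mul_kron_by A B A' B' :
  kron_by h A B *m kron_by h A' B' = kron_by h (A *m A') (B *m B').
Proof.
apply/matrixP=> i j; rewrite !mxE.
under eq_bigr do rewrite !mxE mulrACA.
rewrite (sum_kron_index (fun a b => A (h i).1 a * A' a (h j).1 * (B (h i).2 b * B' b (h j).2))).
by rewrite mulr_suml; apply: eq_bigr => a _; rewrite mulr_sumr.
Qed.

Lemma adj_kron_by A B : adj (kron_by h A B) = kron_by h (adj A) (adj B).
Proof. by apply/matrixP=> i j; rewrite !mxE rmorphM. Qed.

Lemma tr_kron_by A B : \tr (kron_by h A B) = \tr A * \tr B.
Proof.
rewrite /mxtrace; under eq_bigr do rewrite mxE.
rewrite (sum_kron_index (fun a b => A a a * B b b)) mulr_suml.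
by apply: eq_bigr => a _; rewrite mulr_sumr.
Qed.

Lemma kron_by_diagf f g F (d1 : 'rV[R]_n1) (d2 : 'rV[R]_n2) (e : 'rV[R]_N) :
  (forall k, F (e 0 k) = f (d1 0 (h k).1) * g (d2 0 (h k).2)) ->
  kron_by h (diagf f d1) (diagf g d2) = diagf F e.
Proof.
move=> eE; apply/matrixP=> i j; rewrite mxE !diagfE eE rmorphM -(inj_eq h_inj).
case: (h i) (h j) => a b [a' b']; rewrite xpair_eqE /=.
by case: (a == a'); case: (b == b'); rewrite ?mulr1n ?mulr0n ?mulr0 ?mul0r.
Qed.

Lemma kron_by1 : kron_by h 1%:M 1%:M = 1%:M.
Proof.
apply/matrixP=> i j; rewrite !mxE -(inj_eq h_inj).
case: (h i) (h j) => a b [a' b']; rewrite xpair_eqE /=.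
by case: (a == a'); case: (b == b'); rewrite ?mulr1n ?mulr0n ?mulr1 ?mulr0.
Qed.

Lemma unitary_kron_by U1 U2 : unitary U1 -> unitary U2 -> unitary (kron_by h U1 U2).
Proof.
move=> /eqP uU1 /eqP uU2; apply/eqP.
by rewrite adj_kron_by mul_kron_by uU1 uU2 kron_by1.
Qed.

Definition kron_spectrum (d1 : 'rV[R]_n1) (d2 : 'rV[R]_n2) : 'rV[R]_N :=
  \row_k (d1 0 (h k).1 * d2 0 (h k).2).

Lemma spectral_dec_kron_by A B U1 U2 d1 d2 :
  spectral_dec A (U1, d1) -> spectral_dec B (U2, d2) ->
  spectral_dec (kron_by h A B) (kron_by h U1 U2, kron_spectrum d1 d2).
Proof.
move=> [uU1 AE] [uU2 BE]; split; first exact: unitary_kron_by.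
rewrite /= adj_kron_by AE BE -!mul_kron_by; congr (_ *m _ *m _).
by apply: kron_by_diagf => k; rewrite mxE.
Qed.

Lemma nneg_spectral_kron_by A B :
  nneg_spectral A -> nneg_spectral B -> nneg_spectral (kron_by h A B).
Proof.
move=> [U1 [d1 [Ad d1_ge0]]] [U2 [d2 [Bd d2_ge0]]].
exists (kron_by h U1 U2), (kron_spectrum d1 d2); split; first exact: spectral_dec_kron_by.
by move=> k; rewrite mxE mulr_ge0.
Qed.

Lemma mfun_kron_by f A B :
  (forall x y, 0 <= x -> 0 <= y -> f (x * y) = f x * f y) ->
  nneg_spectral A -> nneg_spectral B ->
  mfun f (kron_by h A B) = kron_by h (mfun f A) (mfun f B).
Proof.
move=> fM [U1 [d1 [Ad d1_ge0]]] [U2 [d2 [Bd d2_ge0]]].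
rewrite (mfunE _ (spectral_dec_kron_by Ad Bd)) (mfunE _ Ad) (mfunE _ Bd).
rewrite adj_kron_by -!mul_kron_by; congr (_ *m _ *m _).
by apply/esym/kron_by_diagf => k; rewrite mxE fM.
Qed.

End KronBy.

Lemma fst2_idx2 m n (i : 'I_m) (j : 'I_n) : fst2 (idx2 i j) = i.
Proof. by rewrite /fst2 /idx2 mxtens_indexK. Qed.

Lemma snd2_idx2 m n (i : 'I_m) (j : 'I_n) : snd2 (idx2 i j) = j.
Proof. by rewrite /snd2 /idx2 mxtens_indexK. Qed.

Lemma idx2K m n (k : 'I_(m * n)) : idx2 (fst2 k) (snd2 k) = k.
Proof. by rewrite /idx2 /fst2 /snd2 -surjective_pairing mxtens_unindexK. Qed.

Lemma idx2_eqE m n (i i' : 'I_m) (j j' : 'I_n) :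
  (idx2 i j == idx2 i' j') = (i == i') && (j == j').
Proof.
apply/eqP/andP => [ijE|[/eqP-> /eqP->]] //.
move: (congr1 fst2 ijE) (congr1 snd2 ijE).
by rewrite !fst2_idx2 !snd2_idx2 => -> ->; rewrite !eqxx.
Qed.

Ltac idx_simpl :=
  rewrite ?/idx3; repeat first [rewrite fst2_idx2 | rewrite snd2_idx2 | rewrite idx2K].

Definition unpair_idx m n (k : 'I_(m * n)) : 'I_m * 'I_n := (fst2 k, snd2 k).

Definition regroup2 m m1 n n1 (i : 'I_((m * m1) * (n * n1))) :
    'I_(m * n) * 'I_(m1 * n1) :=
  (idx2 (fst2 (fst2 i)) (fst2 (snd2 i)), idx2 (snd2 (fst2 i)) (snd2 (snd2 i))).

Definition regroup3 a a1 b b1 e e1 (i : 'I_((a * a1) * (b * b1) * (e * e1))) :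
    'I_(a * b * e) * 'I_(a1 * b1 * e1) :=
  (idx3 (fst2 (fst2 (fst2 i))) (fst2 (snd2 (fst2 i))) (fst2 (snd2 i)),
   idx3 (snd2 (fst2 (fst2 i))) (snd2 (snd2 (fst2 i))) (snd2 (snd2 i))).

Definition unassoc_idx3 a b e (i : 'I_(a * b * e)) : 'I_a * 'I_(b * e) :=
  (fst2 (fst2 i), idx2 (snd2 (fst2 i)) (snd2 i)).

Lemma unpair_idx_bij m n : bijective (@unpair_idx m n).
Proof. by exists (fun p => idx2 p.1 p.2) => [k|[x y]]; rewrite /unpair_idx /=; idx_simpl. Qed.

Lemma regroup2_bij m m1 n n1 : bijective (@regroup2 m m1 n n1).
Proof.
exists (fun p => idx2 (idx2 (fst2 p.1) (fst2 p.2)) (idx2 (snd2 p.1) (snd2 p.2))).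
  by move=> k; rewrite /regroup2 /=; idx_simpl.
by case=> x y; rewrite /regroup2 /=; idx_simpl.
Qed.

Lemma regroup3_bij a a1 b b1 e e1 : bijective (@regroup3 a a1 b b1 e e1).
Proof.
exists (fun p => idx2 (idx2 (idx2 (fst2 (fst2 p.1)) (fst2 (fst2 p.2)))
                            (idx2 (snd2 (fst2 p.1)) (snd2 (fst2 p.2))))
                      (idx2 (snd2 p.1) (snd2 p.2))).
  by move=> k; rewrite /regroup3 /=; idx_simpl.
by case=> x y; rewrite /regroup3 /=; idx_simpl.
Qed.

Lemma unassoc_idx3_bij a b e : bijective (@unassoc_idx3 a b e).
Proof.
exists (fun p => idx2 (idx2 p.1 (fst2 p.2)) (snd2 p.2)).
  by move=> k; rewrite /unassoc_idx3 /=; idx_simpl.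
by case=> x y; rewrite /unassoc_idx3 /=; idx_simpl.
Qed.

Lemma sum_idx2 m n (F : 'I_(m * n) -> C) : \sum_k F k = \sum_i \sum_j F (idx2 i j).
Proof.
rewrite -(sum_kron_index (unpair_idx_bij m n) (fun i j => F (idx2 i j))).
by apply: eq_bigr => k _; rewrite idx2K.
Qed.

Definition tens3 a b e (S : 'M[C]_a) (T : 'M[C]_b) (G : 'M[C]_e) : 'M[C]_(a * b * e) :=
  \matrix_(i, j) (S (fst2 (fst2 i)) (fst2 (fst2 j)) * T (snd2 (fst2 i)) (snd2 (fst2 j))
                  * G (snd2 i) (snd2 j)).

Section Regroup.
Variables dA dB dE dA1 dB1 dE1 : nat.
Local Notation regroup3 := (@regroup3 dA dA1 dB dB1 dE dE1).

Lemma prod_state_kron (W : 'M[C]_(dA * dB * dE)) S T G :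
  prod_state W S T G = kron_by regroup3 W (tens3 S T G).
Proof. by apply/matrixP=> i j; rewrite !mxE /regroup3 /=; idx_simpl; rewrite !mulrA. Qed.

Lemma ptrB_kron (M : 'M[C]_(dA * dB * dE)) (N : 'M[C]_(dA1 * dB1 * dE1)) :
  ptrB (kron_by regroup3 M N) = kron_by (@regroup2 dA dA1 dE dE1) (ptrB M) (ptrB N).
Proof.
apply/matrixP=> i j; rewrite [LHS]mxE [RHS]mxE /regroup2 /= !mxE; idx_simpl.
rewrite sum_idx2 mulr_suml; apply: eq_bigr => b _; rewrite mulr_sumr.
by apply: eq_bigr => b1 _; rewrite !mxE /regroup3 /=; idx_simpl.
Qed.

Lemma ptrA_AE_kron (M : 'M[C]_(dA * dE)) (N : 'M[C]_(dA1 * dE1)) :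
  ptrA_AE (kron_by (@regroup2 dA dA1 dE dE1) M N) =
  kron_by (@unpair_idx dE dE1) (ptrA_AE M) (ptrA_AE N).
Proof.
apply/matrixP=> i j; rewrite [LHS]mxE [RHS]mxE /unpair_idx /= !mxE; idx_simpl.
rewrite sum_idx2 mulr_suml; apply: eq_bigr => a _; rewrite mulr_sumr.
by apply: eq_bigr => a1 _; rewrite !mxE /regroup2 /=; idx_simpl.
Qed.

Lemma liftAE_kron (P : 'M[C]_(dA * dE)) (Q : 'M[C]_(dA1 * dE1)) :
  liftAE (dB * dB1) (kron_by (@regroup2 dA dA1 dE dE1) P Q) =
  kron_by regroup3 (liftAE dB P) (liftAE dB1 Q).
Proof.
apply/matrixP=> i j; rewrite !mxE /regroup2 /regroup3 /=; idx_simpl.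
rewrite -[X in X == _]idx2K -[X in _ == X]idx2K idx2_eqE.
by case: (_ == _); case: (_ == _); rewrite ?mul1r ?mul0r ?mulr0.
Qed.

Lemma ptrA_kron (M : 'M[C]_(dA * dB * dE)) (N : 'M[C]_(dA1 * dB1 * dE1)) :
  ptrA (kron_by regroup3 M N) = kron_by (@regroup2 dB dB1 dE dE1) (ptrA M) (ptrA N).
Proof.
apply/matrixP=> i j; rewrite [LHS]mxE [RHS]mxE /regroup2 /= !mxE; idx_simpl.
rewrite sum_idx2 mulr_suml; apply: eq_bigr => a _; rewrite mulr_sumr.
by apply: eq_bigr => a1 _; rewrite !mxE /regroup3 /=; idx_simpl.
Qed.

Lemma liftE_kron (Z1 : 'M[C]_dE) (Z2 : 'M[C]_dE1) :
  liftE (dB * dB1) (kron_by (@unpair_idx dE dE1) Z1 Z2) =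
  kron_by (@regroup2 dB dB1 dE dE1) (liftE dB Z1) (liftE dB1 Z2).
Proof.
apply/matrixP=> i j; rewrite !mxE /unpair_idx /regroup2 /=; idx_simpl.
rewrite -[X in X == _]idx2K -[X in _ == X]idx2K idx2_eqE.
by case: (_ == _); case: (_ == _); rewrite ?mul1r ?mul0r ?mulr0.
Qed.

End Regroup.

Section Tens3.
Variables a b e : nat.

Lemma tens3_kron (S : 'M[C]_a) (T : 'M[C]_b) (G : 'M[C]_e) :
  tens3 S T G = kron_by (@unassoc_idx3 a b e) S (kron_by (@unpair_idx b e) T G).
Proof.
by apply/matrixP=> i j; rewrite !mxE /unassoc_idx3 /unpair_idx /=; idx_simpl; rewrite mulrA.
Qed.

Lemma ptrB_tens3 (S : 'M[C]_a) (T : 'M[C]_b) (G : 'M[C]_e) : \tr T = 1 ->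
  ptrB (tens3 S T G) = kron_by (@unpair_idx a e) S G.
Proof.
move=> trT; apply/matrixP=> i j; rewrite !mxE -[RHS]mulr1 -trT mulr_sumr.
by apply: eq_bigr => k _; rewrite !mxE; idx_simpl; rewrite mulrAC.
Qed.

Lemma ptrA_AE_tens (S : 'M[C]_a) (G : 'M[C]_e) : \tr S = 1 ->
  ptrA_AE (kron_by (@unpair_idx a e) S G) = G.
Proof.
move=> trS; apply/matrixP=> i j; rewrite !mxE -[RHS]mul1r -trS mulr_suml.
by apply: eq_bigr => k _; rewrite !mxE /unpair_idx /=; idx_simpl.
Qed.

Lemma liftAE_tens (P : 'M[C]_a) (Q : 'M[C]_e) :
  liftAE b (kron_by (@unpair_idx a e) P Q) =
  kron_by (@unassoc_idx3 a b e) P (kron_by (@unpair_idx b e) 1%:M Q).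
Proof.
apply/matrixP=> i j; rewrite !mxE /unassoc_idx3 /unpair_idx /=; idx_simpl.
by rewrite mulrCA mulrA.
Qed.

Lemma ptrA_tens (P : 'M[C]_a) (Q : 'M[C]_(b * e)) :
  ptrA (kron_by (@unassoc_idx3 a b e) P Q) = \tr P *: Q.
Proof.
apply/matrixP=> i j; rewrite !mxE mulr_suml.
by apply: eq_bigr => k _; rewrite !mxE /unassoc_idx3 /=; idx_simpl.
Qed.

Lemma liftE_tens (Z : 'M[C]_e) : liftE b Z = kron_by (@unpair_idx b e) 1%:M Z.
Proof. by apply/matrixP=> i j; rewrite !mxE. Qed.

End Tens3.

(** * The operator inside the Renyi conditional mutual information *)

Definition gpow (p x : R) : R := if x == 0 then 0 else x `^ p.

Lemma mpowE n (M : 'M[C]_n) p : mpow M p = mfun (gpow p) M.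
Proof. by []. Qed.

Lemma gpow_ge0 p x : 0 <= gpow p x.
Proof. by rewrite /gpow; case: eqP => // _; exact: powR_ge0. Qed.

Lemma gpowM p x y : 0 <= x -> 0 <= y -> gpow p (x * y) = gpow p x * gpow p y.
Proof.
move=> x_ge0 y_ge0; rewrite /gpow mulf_eq0.
have [->|_] := eqVneq x 0; first by rewrite /= mul0r.
by have [->|_] := eqVneq y 0; rewrite /= ?orbT ?mulr0 // powRM.
Qed.

Lemma gpowD3 p q r x : 0 <= x ->
  gpow p x * gpow q x * gpow r x = gpow (p + q + r) x.
Proof.
rewrite /gpow; have [->|x0 x_ge0] := eqVneq x 0; first by rewrite !mulr0.
by rewrite -!powRD // x0 implybT.
Qed.

Lemma gpow1 x : 0 <= x -> gpow 1 x = x.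
Proof. by rewrite /gpow; case: eqP => [->|_ /powRr1]. Qed.

Lemma gpowK p x : p != 0 -> 0 <= x -> gpow p^-1 (gpow p x) = x.
Proof.
move=> p0 x_ge0; rewrite /gpow; have [->|x0] := eqVneq x 0; first by rewrite eqxx.
by rewrite powR_eq0 (negbTE x0) -powRrM mulfV // powRr1.
Qed.

Lemma mpow_kron_by N n1 n2 (h : 'I_N -> 'I_n1 * 'I_n2) p (A : 'M[C]_n1) (B : 'M[C]_n2) :
  bijective h -> nneg_spectral A -> nneg_spectral B ->
  mpow (kron_by h A B) p = kron_by h (mpow A p) (mpow B p).
Proof. by move=> h_bij; apply: mfun_kron_by => // x y; exact: gpowM. Qed.

Lemma nneg_spectral_mpow n p (M : 'M[C]_n) : nneg_spectral M -> nneg_spectral (mpow M p).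
Proof. exact/nneg_spectral_mfun/gpow_ge0. Qed.

Lemma adj_liftAE dA dB dE (X : 'M[C]_(dA * dE)) : adj (liftAE dB X) = liftAE dB (adj X).
Proof. by apply/matrixP=> i j; rewrite !mxE rmorphM rmorph_nat eq_sym. Qed.

Lemma adj_liftE dB dE (Z : 'M[C]_dE) : adj (liftE dB Z) = liftE dB (adj Z).
Proof. by apply/matrixP=> i j; rewrite !mxE rmorphM rmorph_nat eq_sym. Qed.

Lemma mulmx_mpow3 n (M : 'M[C]_n) p q r s : nneg_spectral M -> p + q + r = s ->
  mpow M p *m mpow M q *m mpow M r = mpow M s.
Proof. by move=> nnM <-; apply: mulmx_mfun3 => // x; exact: gpowD3. Qed.

Lemma mpow1 n (M : 'M[C]_n) : nneg_spectral M -> mpow M 1 = M.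
Proof.
move=> [U [d [Md d_ge0]]]; rewrite mpowE -[RHS](mfun_id Md).
by apply: (eq_mfun Md) => i; exact: gpow1.
Qed.

Lemma mpowK n (M : 'M[C]_n) p : p != 0 -> nneg_spectral M -> mpow (mpow M p) p^-1 = M.
Proof. by move=> p0 nnM; apply: mfun_invK => // x; exact: gpowK. Qed.

Definition cmi_op dA dB dE (alpha : R) (rho : 'M[C]_(dA * dB * dE)) : 'M[C]_(dB * dE) :=
  let X := liftAE dB (mpow (ptrB rho) ((1 - alpha) / 2)) in
  let Y := liftE dB (mpow (ptrA_AE (ptrB rho)) ((alpha - 1) / 2)) in
  Y *m ptrA (X *m mpow rho alpha *m X) *m Y.

Lemma renyi_cmiE dA dB dE alpha (rho : 'M[C]_(dA * dB * dE)) :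
  renyi_cmi alpha rho =
  alpha / (alpha - 1) * ln (complex.Re (\tr (mpow (cmi_op alpha rho) alpha^-1))).
Proof. by []. Qed.

Lemma psd_cmi_op dA dB dE alpha (rho : 'M[C]_(dA * dB * dE)) : psd (cmi_op alpha rho).
Proof.
rewrite /cmi_op; set Y := liftE _ _; set X := liftAE _ _.
have YE : adj Y = Y by rewrite /Y adj_liftE adj_mfun.
rewrite -[X in psd (X *m _ *m _)]YE; apply/psd_adj_conj/psd_ptrA.
have XE : adj X = X by rewrite /X adj_liftAE adj_mfun.
rewrite -[X' in psd (X' *m _ *m _)]XE.
by apply/psd_adj_conj/psd_mfun/gpow_ge0.
Qed.

Lemma cmi_op_kron dA dB dE dA1 dB1 dE1 alpha
    (M : 'M[C]_(dA * dB * dE)) (N : 'M[C]_(dA1 * dB1 * dE1)) :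
  psd M -> psd N ->
  cmi_op alpha (kron_by (@regroup3 dA dA1 dB dB1 dE dE1) M N) =
  kron_by (@regroup2 dB dB1 dE dE1) (cmi_op alpha M) (cmi_op alpha N).
Proof.
move=> psdM psdN; rewrite /cmi_op.
have [psdMAE psdNAE] := (psd_ptrB psdM, psd_ptrB psdN).
have [nnM nnN] := (psd_nneg_spectral psdM, psd_nneg_spectral psdN).
have [nnMAE nnNAE] := (psd_nneg_spectral psdMAE, psd_nneg_spectral psdNAE).
have nnME := psd_nneg_spectral (psd_ptrA_AE psdMAE).
have nnNE := psd_nneg_spectral (psd_ptrA_AE psdNAE).
have bij3 := @regroup3_bij dA dA1 dB dB1 dE dE1.
have [bijAE bijBE] := (@regroup2_bij dA dA1 dE dE1, @regroup2_bij dB dB1 dE dE1).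
have bijE := @unpair_idx_bij dE dE1.
rewrite ptrB_kron mpow_kron_by // liftAE_kron mpow_kron_by // !mul_kron_by // ptrA_kron.
by rewrite ptrA_AE_kron mpow_kron_by // liftE_kron !mul_kron_by.
Qed.

(* For the product state every power cancels: [X rho^alpha X] reduces to
   [S (x) T^alpha (x) G] and the [E]-conjugation turns [G] into [G^alpha]. *)
Lemma cmi_op_tens3 a b e alpha (S : 'M[C]_a) (T : 'M[C]_b) (G : 'M[C]_e) :
  is_state S -> is_state T -> psd G ->
  cmi_op alpha (tens3 S T G) = kron_by (@unpair_idx b e) (mpow T alpha) (mpow G alpha).
Proof.
move=> [/psd_nneg_spectral nnS trS] [/psd_nneg_spectral nnT trT] /psd_nneg_spectral nnG.
have [bijAE bijBE] := (unpair_idx_bij a e, unpair_idx_bij b e).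
have bij3 := unassoc_idx3_bij a b e.
rewrite /cmi_op ptrB_tens3 // ptrA_AE_tens // mpow_kron_by // liftAE_tens tens3_kron.
have nnTG := nneg_spectral_kron_by bijBE nnT nnG.
rewrite mpow_kron_by // mpow_kron_by // liftE_tens.
(* Unrestricted, [mul_kron_by] would try expensive unifications of [kron_by]
   with the other matrix products in the goal. *)
rewrite ![in ptrA _](mul_kron_by bij3) ![in ptrA _](mul_kron_by bijBE) ptrA_tens.
have sum1 : (1 - alpha) / 2 + alpha + (1 - alpha) / 2 = 1 by field.
have sum_alpha : (alpha - 1) / 2 + 1 + (alpha - 1) / 2 = alpha by field.
rewrite (mulmx_mpow3 nnS sum1) (mulmx_mpow3 nnG sum1) (mpow1 nnS) (mpow1 nnG).
rewrite trS scale1r mul1mx mulmx1 !(mul_kron_by bijBE) mul1mx mulmx1.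
by rewrite -[X in _ *m X *m _](mpow1 nnG) (mulmx_mpow3 nnG sum_alpha).
Qed.

Lemma psd_tens3 a b e (S : 'M[C]_a) (T : 'M[C]_b) (G : 'M[C]_e) :
  psd S -> psd T -> psd G -> psd (tens3 S T G).
Proof.
move=> /psd_nneg_spectral nnS /psd_nneg_spectral nnT /psd_nneg_spectral nnG.
rewrite tens3_kron; apply: nneg_spectral_psd.
apply: (nneg_spectral_kron_by (unassoc_idx3_bij a b e)) => //.
exact: (nneg_spectral_kron_by (unpair_idx_bij b e)).
Qed.

Lemma tr_mpow_cmi_op_tens3 a b e alpha (S : 'M[C]_a) (T : 'M[C]_b) (G : 'M[C]_e) :
  alpha != 0 -> is_state S -> is_state T -> is_state G ->
  \tr (mpow (cmi_op alpha (tens3 S T G)) alpha^-1) = 1.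
Proof.
move=> alpha0 stS [psdT trT] [psdG trG].
have [nnT nnG] := (psd_nneg_spectral psdT, psd_nneg_spectral psdG).
have [nnTa nnGa] := (nneg_spectral_mpow alpha nnT, nneg_spectral_mpow alpha nnG).
have bij := unpair_idx_bij b e.
rewrite cmi_op_tens3 // mpow_kron_by // tr_kron_by //.
by rewrite !mpowK // trT trG mulr1.
Qed.

End QuantumRenyi.

Theorem lemma2 (R : realType) (alpha : R) (dA dB dE dA1 dB1 dE1 : nat)
  (omega : 'M[R[i]]_(dA * dB * dE)) (sigma : 'M[R[i]]_dA1)
  (tau : 'M[R[i]]_dB1) (gamma : 'M[R[i]]_dE1) :
  0 < alpha -> alpha != 1 ->
  is_state omega -> is_state sigma -> is_state tau -> is_state gamma ->
  renyi_cmi alpha (prod_state omega sigma tau gamma) = renyi_cmi alpha omega.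
Proof.
move=> alpha_gt0 _ [psd_omega _] st_sigma st_tau st_gamma.
have psd_prod := psd_tens3 (proj1 st_sigma) (proj1 st_tau) (proj1 st_gamma).
have nn_op a b e (rho : 'M[R[i]]_(a * b * e)) : nneg_spectral (cmi_op alpha rho).
  exact/psd_nneg_spectral/psd_cmi_op.
have bij := @regroup2_bij dB dB1 dE dE1.
rewrite !renyi_cmiE prod_state_kron cmi_op_kron // mpow_kron_by // tr_kron_by //.
by rewrite tr_mpow_cmi_op_tens3 ?gt_eqF // mulr1.
Qed.
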